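(* There is no Steiner triple system of order $v>3$ whose $2$-rank is less than $v$ and whose $3$-rank is less than $v-1$.
   Context: A Steiner triple system of order $v$ on $\{1,\ldots,v\}$ is a collection of 3-subsets (blocks) such that every 2-subset is contained in exactly one block. For a prime $p$, the $p$-rank of such a system is the dimension of the $\mathrm{GF}(p)$-linear span of the characteristic vectors of its blocks in $\mathrm{GF}(p)^v$. *)

From HB Require Import structures.
From mathcomp Require Import all_boot all_order all_algebra.
Set Implicit Arguments. Unset Strict Implicit. Unset Printing Implicit Defensive.
Import GRing.Theory.
Local Open Scope ring_scope.

(* Points {1,...,v} are represented by 'I_v; blocks are subsets of 'I_v. *)
Definition is_STS (v : nat) (B : {set {set 'I_v}}) : Prop :=
  (forall b, b \in B -> #|b| = 3%N) /\
  (forall S : {set 'I_v}, #|S| = 2%N -> #|[set b in B | S \subset b]| = 1%N).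

Definition char_vec (p v : nat) (b : {set 'I_v}) : 'rV['F_p]_v :=
  \row_(i < v) ((i \in b)%:R : 'F_p).

Definition p_rank (p v : nat) (B : {set {set 'I_v}}) : nat :=
  \rank (\sum_(b in B) <<char_vec p b>>)%MS.

From mathcomp Require Import all_boot all_order all_algebra.
From mathcomp Require Import ring zify.
Set Implicit Arguments. Unset Strict Implicit. Unset Printing Implicit Defensive.
Import GRing.Theory.
Local Open Scope ring_scope.

(* Since p_rank 2 < v and p_rank 3 < v - 1, there are h : 'I_v -> F_2 nonzero
   and g : 'I_v -> F_3 nonconstant whose sum over every block vanishes: h is
   nonzero on 0 or 2 points of each block, and g is constant or injective on
   each block.  For h p <> 0 the map x |-> third p x sends the zeros of h
   injectively into the other nonzeros, so h has more nonzeros than zeros.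
   If some fibre of g contains p, q with h p <> h q, the composite of the
   "reflections" x |-> third p x and x |-> third q x preserves g and flips h
   off the fibre of p (a second such pair, built from the first, covers that
   fibre), so h has at most as many nonzeros as zeros: a contradiction.
   Otherwise h is constant on the fibres of g, which forces the fibre of a
   nonzero of h to be a singleton and then g to be injective, i.e. v <= 3. *)

Lemma F2_char : 2%N \in [pchar 'F_2]. Proof. exact: pchar_Fp. Qed.

Lemma F2_eq1 (a : 'F_2) : a != 0 -> a = 1.
Proof. by case: a => [[|[|//]]] //= ? _; apply: val_inj. Qed.

Lemma F2_add_neq (a b : 'F_2) : a != b -> a + b = 1.
Proof. by move=> ab; apply: F2_eq1; rewrite addr_eq0 (oppr_pchar2 F2_char). Qed.

Lemma F3_oppD_eq (a b : 'F_3) : (- (a + b) == a) = (b == a).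
Proof.
have a3 : a *+ 3 = 0 by rewrite -mulr_natr pchar_Fp_0 ?mulr0.
rewrite -subr_eq0 (_ : _ - a = a - b - a *+ 3); last by ring.
by rewrite a3 subr0 subr_eq0 eq_sym.
Qed.

Lemma card_setD2 (T : finType) (A : {set T}) a b :
  #|A| = 3%N -> a \in A -> b \in A -> a != b -> #|A :\ a :\ b| = 1%N.
Proof.
move=> A3 aA bA ab; have := cardsD1 a A; have := cardsD1 b (A :\ a).
by rewrite !inE eq_sym ab aA bA A3; lia.
Qed.

Lemma leq_card_in_sub (T T' : finType) (A : {set T}) (C : {set T'})
    (f : T -> T') :
  {in A &, injective f} -> {in A, forall x, f x \in C} -> (#|A| <= #|C|)%N.
Proof.
move=> f_inj fAC; rewrite -(card_in_imset f_inj); apply: subset_leq_card.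
by apply/subsetP => _ /imsetP [x xA ->]; apply: fAC.
Qed.

Lemma mxrank_gt0_entry (F : fieldType) m n (A : 'M[F]_(m, n)) :
  (0 < \rank A)%N -> exists i j, A i j != 0.
Proof.
rewrite lt0n mxrank_eq0 => nzA.
have : ~~ [forall i, forall j, A i j == 0].
  apply: contra nzA => /forallP A0; apply/eqP/matrixP => i j.
  by rewrite mxE; apply/eqP/(forallP (A0 i)).
by case/forallPn => i /forallPn [j Aij]; exists i, j.
Qed.

Lemma mxrank_gt1_nonconst_row (F : fieldType) m n (A : 'M[F]_(m, n)) :
  (1 < \rank A)%N -> exists i j1 j2, A i j1 != A i j2.
Proof.
move=> rkA; have [_ [j0 _]] := mxrank_gt0_entry (ltnW rkA).
have : ~~ [forall i, forall j, A i j == A i j0].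
  apply: contraL rkA => /forallP A_const; rewrite -leqNgt.
  apply: leq_trans (rank_leq_row (const_mx 1 : 'rV[F]_n)).
  apply/mxrankS/row_subP => i.
  rewrite (_ : row i A = A i j0 *: const_mx 1) ?scalemx_sub //.
  by apply/rowP => j; rewrite !mxE mulr1; apply/eqP/(forallP (A_const i)).
by case/forallPn => i /forallPn [j Aij]; exists i, j, j0.
Qed.

Section SteinerTripleSystem.
Variables (v : nat) (B : {set {set 'I_v}}).

Definition block_null (R : zmodType) (f : 'I_v -> R) :=
  forall b, b \in B -> \sum_(i in b) f i = 0.

Definition blocks_span p := (\sum_(b in B) <<char_vec p b>>)%MS.

Lemma rank_ker_blocks_span p :
  \rank (kermx (blocks_span p)^T) = (v - p_rank p B)%N.
Proof. by rewrite mxrank_ker mxrank_tr. Qed.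

Lemma mul_char_vec p m (K : 'M['F_p]_(m, v)) k b :
  (K *m (char_vec p b)^T) k 0 = \sum_(i in b) K k i.
Proof.
rewrite mxE [RHS]big_mkcond; apply: eq_bigr => i _.
by rewrite !mxE; case: (i \in b); rewrite ?mulr1 ?mulr0.
Qed.

Lemma block_null_ker p m (K : 'M['F_p]_(m, v)) k :
  (K <= kermx (blocks_span p)^T)%MS -> block_null (K k).
Proof.
rewrite sub_kermx => /eqP K_ker b bB; rewrite -mul_char_vec.
have /submxP [D ->] : (char_vec p b <= blocks_span p)%MS.
  by apply: (sumsmx_sup b) => //; rewrite genmxE.
by rewrite trmx_mul mulmxA K_ker mul0mx mxE.
Qed.

Lemma exists_block_null_nonzero p : (p_rank p B < v)%N ->
  exists2 h : 'I_v -> 'F_p, block_null h & exists i, h i != 0.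
Proof.
rewrite -subn_gt0 -rank_ker_blocks_span => /mxrank_gt0_entry [k nz].
by exists (kermx (blocks_span p)^T k); first exact: block_null_ker.
Qed.

Lemma exists_block_null_nonconst p : (p_rank p B < v - 1)%N ->
  exists2 g : 'I_v -> 'F_p, block_null g & exists i j, g i != g j.
Proof.
move=> rk; have : (1 < \rank (kermx (blocks_span p)^T))%N.
  by rewrite rank_ker_blocks_span; lia.
move=> /mxrank_gt1_nonconst_row [k nz].
by exists (kermx (blocks_span p)^T k); first exact: block_null_ker.
Qed.

Hypothesis sts : is_STS B.

Lemma unique_block a b : a != b ->
  exists bl0, forall bl, [&& bl \in B, a \in bl & b \in bl] = (bl == bl0).
Proof.
move=> ab.
have /cards1P [bl0 E] : #|[set bl in B | [set a; b] \subset bl]| == 1%N.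
  by apply/eqP/sts.2; rewrite cards2 ab.
by exists bl0 => bl; rewrite -in_set1 -E inE subUset !sub1set.
Qed.

Definition block_through a b :=
  odflt set0 [pick bl in B | (a \in bl) && (b \in bl)].

Lemma block_throughP a b : a != b ->
  [/\ block_through a b \in B, a \in block_through a b & b \in block_through a b].
Proof.
move=> /unique_block [bl0 E]; rewrite /block_through.
case: pickP => [bl /and3P [] // | none].
by move: (E bl0); rewrite eqxx none.
Qed.

Lemma block_through_eq bl a b :
  bl \in B -> a \in bl -> b \in bl -> a != b -> block_through a b = bl.
Proof.
move=> blB abl bbl ab; have [bl0 E] := unique_block ab.
have {}E c : c \in B -> a \in c -> b \in c -> c = bl0.
  by move=> cB ac bc; apply/eqP; rewrite -E cB ac bc.
by have [tB atB btB] := block_throughP ab; rewrite (E bl) // (E _ tB).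
Qed.

Definition third a b :=
  odflt a [pick c in block_through a b | (c != a) && (c != b)].

Lemma block_throughD2 a b :
  a != b -> block_through a b :\ a :\ b = [set third a b].
Proof.
move=> ab; have [tB atB btB] := block_throughP ab.
have /eqP/cards1P [c E] := card_setD2 (sts.1 _ tB) atB btB ab.
rewrite E /third; congr [set _].
case: pickP => [c' /and3P [c't c'a c'b] | none] /=.
  by apply/esym/set1P; rewrite -E !inE c'a c'b.
move: (set11 c); rewrite -E !inE => /and3P [cb ca ct].
by move: (none c); rewrite /= ct ca cb.
Qed.

Lemma third_in a b : a != b ->
  [/\ third a b \in block_through a b, third a b != a & third a b != b].
Proof.
move=> ab; have := set11 (third a b).
by rewrite -block_throughD2 // !inE => /and3P [].
Qed.

Lemma third_block bl a b c : bl \in B -> a \in bl -> b \in bl -> c \in bl ->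
  a != b -> c != a -> c != b -> third a b = c.
Proof.
move=> blB abl bbl cbl ab ca cb; apply/esym/set1P.
by rewrite -block_throughD2 // (block_through_eq blB abl bbl ab) !inE ca cb.
Qed.

Lemma thirdC a b : a != b -> third a b = third b a.
Proof.
move=> ab; have [tB atB btB] := block_throughP ab.
have [ct ca cb] := third_in ab.
by apply/esym/(third_block tB); rewrite // eq_sym.
Qed.

Lemma thirdK a b : a != b -> third a (third a b) = b.
Proof.
move=> ab; have [tB atB btB] := block_throughP ab.
have [ct ca cb] := third_in ab.
by apply: (third_block tB); rewrite // eq_sym.
Qed.

Lemma third_inj a : {in [pred x | x != a] &, injective (third a)}.
Proof. by apply: can_in_inj => x; rewrite inE eq_sym; apply: thirdK. Qed.

Lemma sum_block_through (R : zmodType) (f : 'I_v -> R) a b : a != b ->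
  \sum_(i in block_through a b) f i = f a + f b + f (third a b).
Proof.
move=> ab; have [_ atB btB] := block_throughP ab.
rewrite (big_setD1 a atB) (big_setD1 b) ?inE 1?eq_sym ?ab //=.
by rewrite block_throughD2 // big_set1 addrA.
Qed.

Lemma block_null_third (R : zmodType) (f : 'I_v -> R) a b :
  block_null f -> a != b -> f (third a b) = - (f a + f b).
Proof.
move=> f_null ab; have [/f_null + _ _] := block_throughP ab.
by rewrite sum_block_through // => E; apply/eqP; rewrite -addr_eq0 addrC E.
Qed.

Section NullFunctions.
Variables (h : 'I_v -> 'F_2) (g : 'I_v -> 'F_3).
Hypotheses (h_null : block_null h) (g_null : block_null g).

Lemma h_third a b : a != b -> h (third a b) = h a + h b.
Proof. by move=> ab; rewrite block_null_third // (oppr_pchar2 F2_char). Qed.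

Lemma g_third_eq a b : a != b -> (g (third a b) == g a) = (g b == g a).
Proof. by move=> ab; rewrite block_null_third // F3_oppD_eq. Qed.

Lemma card_h_zero_lt p0 : h p0 != 0 ->
  (#|[set x | h x == 0%R]| < #|[set x | h x != 0%R]|)%N.
Proof.
move=> hp0; rewrite [X in (_ < X)%N](cardsD1 p0) inE hp0 ltnS.
have p0_neq x : h x == 0 -> p0 != x by move=> hx; apply: contraNneq hp0 => ->.
apply: (leq_card_in_sub (f := third p0)) => [x y | x]; rewrite !inE => hx.
  by move=> hy; apply: third_inj; rewrite inE eq_sym p0_neq.
have [_ -> _] := third_in (p0_neq x hx).
by rewrite h_third ?p0_neq // (eqP hx) addr0.
Qed.

Lemma card_h_nonzero_le (phi : 'I_v -> 'I_v) :
  injective phi -> (forall x, h (phi x) = h x + 1) ->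
  (#|[set x | h x != 0%R]| <= #|[set x | h x == 0%R]|)%N.
Proof.
move=> phi_inj h_phi.
apply: (leq_card_in_sub (f := phi)) => [x y _ _ /phi_inj // | x].
by rewrite !inE h_phi => /F2_eq1 ->; rewrite (addrr_pchar2 F2_char).
Qed.

Definition translate p q x := third q (third p x).

Lemma third_neq_fibre p q x : g p = g q -> g x != g p -> third p x != q.
Proof.
move=> gpq gx; have px : p != x by apply: contraNneq gx => ->.
by apply: contraNneq gx => tq; rewrite -(g_third_eq px) tq gpq.
Qed.

Lemma translate_spec p q x : g p = g q -> h p != h q -> g x != g p ->
  g (translate p q x) = g x /\ h (translate p q x) = h x + 1.
Proof.
move=> gpq hpq gx; have px : p != x by apply: contraNneq gx => ->.
have qt : q != third p x by rewrite eq_sym third_neq_fibre.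
rewrite /translate !(block_null_third g_null) // !h_third //.
by rewrite -gpq -(F2_add_neq hpq); split; ring.
Qed.

Lemma translate_inj p q : g p = g q ->
  {in [pred x | g x != g p] &, injective (translate p q)}.
Proof.
move=> gpq x y; rewrite !inE => gx gy /third_inj.
rewrite !inE !third_neq_fibre // => /(_ isT isT) /third_inj -> //; rewrite inE.
  by apply: contraNneq gx => ->.
by apply: contraNneq gy => ->.
Qed.

Lemma exists_h_flip p q y : g p = g q -> h p != h q -> g y != g p ->
  exists2 phi : 'I_v -> 'I_v, injective phi & forall x, h (phi x) = h x + 1.
Proof.
move=> gpq hpq gy; have [gy' hy'] := translate_spec gpq hpq gy.
set y' := translate p q y in gy' hy'.
have hyy' : h y != h y'.
  by rewrite hy' -subr_eq0 opprD addNKr oppr_eq0 oner_neq0.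
pose phi x := if g x == g p then translate y y' x else translate p q x.
have phi_spec x : g (phi x) = g x /\ h (phi x) = h x + 1.
  rewrite /phi; case: eqP => [gx | /eqP gx]; last exact: translate_spec.
  by apply: translate_spec; rewrite // gx eq_sym.
exists phi => [x z phi_xz | x]; last exact: (phi_spec x).2.
have gxz : g x = g z by rewrite -(phi_spec x).1 phi_xz (phi_spec z).1.
move: phi_xz; rewrite /phi -gxz; case: eqP => [gx | /eqP gx].
  by apply: translate_inj; rewrite // !inE -?gxz gx eq_sym.
by apply: translate_inj; rewrite // !inE -?gxz.
Qed.

Lemma fibre_singleton p0 : h p0 != 0 -> (forall x y, g x = g y -> h x = h y) ->
  forall x, g x = g p0 -> x = p0.
Proof.
move=> hp0 h_fibre x gx; apply/eqP; apply: contraNT hp0 => xp0.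
have p0x : p0 != x by rewrite eq_sym.
have gt : g (third p0 x) = g p0 by apply/eqP; rewrite g_third_eq // gx.
by rewrite -(h_fibre _ _ gt) h_third // (h_fibre _ _ gx) (addrr_pchar2 F2_char).
Qed.

Lemma g_inj_of_h_fibre p0 : h p0 != 0 -> (forall x y, g x = g y -> h x = h y) ->
  injective g.
Proof.
move=> hp0 h_fibre; have single := fibre_singleton hp0 h_fibre.
move=> x y gxy; have [gx | gx] := eqVneq (g x) (g p0).
  by rewrite (single x gx) (single y) // -gxy.
have p0x : p0 != x by apply: contraNneq gx => ->.
have [_ zp0 _] := third_in p0x; set z := third p0 x in zp0 *.
have gz : g z = - (g p0 + g x) by apply: block_null_third.
have yz : y != z.
  by apply: contraNneq gx => yz; rewrite eq_sym -F3_oppD_eq addrC -gz -yz gxy.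
have /single w_p0 : g (third y z) = g p0.
  by rewrite block_null_third // gz -gxy; ring.
rewrite -(thirdK p0x) -/z thirdC 1?eq_sym // -w_p0 (thirdC yz) thirdK //.
by rewrite eq_sym.
Qed.

Lemma block_null_F2_F3_le3 p0 j1 j2 : h p0 != 0 -> g j1 != g j2 -> (v <= 3)%N.
Proof.
move=> hp0 gj.
case: (boolP [exists p, exists q, (g p == g q) && (h p != h q)]).
  case/existsP => p /existsP [q /andP [/eqP gpq hpq]].
  have [y gy] : exists y, g y != g p.
    have [gj1 | ] := eqVneq (g j1) (g p); last by exists j1.
    by exists j2; rewrite -gj1 eq_sym.
  have [phi phi_inj h_phi] := exists_h_flip gpq hpq gy.
  have := card_h_nonzero_le phi_inj h_phi.
  by rewrite leqNgt (card_h_zero_lt hp0).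
move=> no_mixed_fibre; have h_fibre x y : g x = g y -> h x = h y.
  move=> gxy; apply/eqP; apply: contraNT no_mixed_fibre => hxy.
  by apply/existsP; exists x; apply/existsP; exists y; rewrite gxy eqxx.
rewrite -(card_Fp (p := 3)) // -[v]card_ord.
exact/leq_card/(g_inj_of_h_fibre hp0 h_fibre).
Qed.
End NullFunctions.
End SteinerTripleSystem.

Theorem proposition3 (v : nat) (B : {set {set 'I_v}}) :
  (3 < v)%N -> is_STS B ->
  ~ ((p_rank 2 B < v)%N /\ (p_rank 3 B < v - 1)%N).
Proof.
move=> v_gt3 sts [rk2 rk3].
have [h h_null [p0 hp0]] := exists_block_null_nonzero rk2.
have [g g_null [j1 [j2 gj]]] := exists_block_null_nonconst rk3.
by have := block_null_F2_F3_le3 sts h_null g_null hp0 gj; rewrite leqNgt v_gt3.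
Qed.
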